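(* Assume the standing setting. Then every vertex of $G$ is incident with at most one nonremovable edge of type I and with at most two nonremovable edges of type II.
   Context: Graphs may have multiple edges but no loops. An edge is admissible if it lies in some perfect matching; a connected graph with at least two vertices is matching covered if every edge is admissible; an edge $e$ of a matching covered graph $G$ is removable if $G-e$ is matching covered, and nonremovable otherwise. A brick is a 3-connected nonbipartite graph $G$ such that $G-x-y$ has a perfect matching for all distinct $x,y$. A nonbipartite matching covered graph $G$ is near-bipartite if it has a pair of edges $\{e_1,e_2\}$ (a removable doubleton) such that $G-\{e_1,e_2\}$ is bipartite matching covered. Standing setting: $G$ is a near-bipartite brick with removable doubleton $\{e_1,e_2\}$, $H=G-\{e_1,e_2\}$, and $(U,W)$ is the bipartition of $H$, labelled so that both ends of $e_1$ lie in $U$ and both ends of $e_2$ lie in $W$. A nonremovable edge $e\notin\{e_1,e_2\}$ of $G$ is of type I if $e$ is removable in $H$, and of type II if $e$ is nonremovable in $H$. *)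

From mathcomp Require Import all_boot.
Set Implicit Arguments. Unset Strict Implicit. Unset Printing Implicit Defensive.

(* A multigraph without loops is given by a finite vertex type V, a finite
   edge type E and two endpoint maps u v : E -> V (loopless: u e != v e).
   A (sub)graph is a pair (S, F) with S : {set V} the vertex set and
   F : {set E} the edge set; we always use it with every edge of F having
   both ends in S. Parallel edges are allowed (distinct e with equal ends). *)

Section Graphs.
Variables (V E : finType) (u v : E -> V).

Definition incident (e : E) (x : V) : bool := (u e == x) || (v e == x).

Definition adj (F : {set E}) : rel V :=
  fun x y => [exists e in F, ((u e == x) && (v e == y)) || ((v e == x) && (u e == y))].

(* edges of F with no end in X (used for G - X) *)
Definition edges_avoiding (F : {set E}) (X : {set V}) : {set E} :=
  [set e in F | (u e \notin X) && (v e \notin X)].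

Definition connected_graph (S : {set V}) (F : {set E}) : Prop :=
  forall x y, x \in S -> y \in S -> connect (adj F) x y.

Definition perfect_matching (S : {set V}) (F : {set E}) (M : {set E}) : Prop :=
  M \subset F /\ forall x, x \in S -> #|[set e in M | incident e x]| = 1.

Definition admissible (S : {set V}) (F : {set E}) (e : E) : Prop :=
  exists M, perfect_matching S F M /\ e \in M.

Definition matching_covered (S : {set V}) (F : {set E}) : Prop :=
  connected_graph S F /\ 2 <= #|S| /\ forall e, e \in F -> admissible S F e.

Definition removable (S : {set V}) (F : {set E}) (e : E) : Prop :=
  e \in F /\ matching_covered S (F :\ e).

Definition nonremovable (S : {set V}) (F : {set E}) (e : E) : Prop :=
  e \in F /\ ~ removable S F e.

Definition bipartite (S : {set V}) (F : {set E}) : Prop :=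
  exists A : {set V}, forall e, e \in F -> (u e \in A) != (v e \in A).

Definition k_connected (k : nat) (S : {set V}) (F : {set E}) : Prop :=
  k < #|S| /\ forall X : {set V}, X \subset S -> #|X| < k ->
    connected_graph (S :\: X) (edges_avoiding F X).

Definition brick (S : {set V}) (F : {set E}) : Prop :=
  [/\ k_connected 3 S F, ~ bipartite S F &
      forall x y, x \in S -> y \in S -> x != y ->
        exists M, perfect_matching (S :\ x :\ y) (edges_avoiding F [set x; y]) M].

Definition removable_doubleton (S : {set V}) (F : {set E}) (e1 e2 : E) : Prop :=
  [/\ e1 \in F, e2 \in F, e1 != e2,
      bipartite S (F :\ e1 :\ e2) & matching_covered S (F :\ e1 :\ e2)].

Definition near_bipartite (S : {set V}) (F : {set E}) : Prop :=
  [/\ matching_covered S F, ~ bipartite S F &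
      exists e1 e2, removable_doubleton S F e1 e2].

Definition typeI (S : {set V}) (F : {set E}) (e1 e2 e : E) : Prop :=
  [/\ e \notin [set e1; e2], nonremovable S F e & removable S (F :\ e1 :\ e2) e].
Definition typeII (S : {set V}) (F : {set E}) (e1 e2 e : E) : Prop :=
  [/\ e \notin [set e1; e2], nonremovable S F e & nonremovable S (F :\ e1 :\ e2) e].

End Graphs.

From Pilot Require Import Defs.
From mathcomp Require Import all_boot zify.
Set Implicit Arguments. Unset Strict Implicit. Unset Printing Implicit Defensive.

(* Let P be the colour class of H containing x.  Every perfect matching of G
   has as many edges inside P as inside its complement, since every edge of H
   crosses; hence e1 and e2 lie on opposite sides and every perfect matching of
   G contains both or neither.

   If e is removable in H and a perfect matching of G contains e1 but not e, it
   contains e2 as well, and with the perfect matchings of H - e it shows that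
   G - e, connected as G is 3-connected, is matching covered.  So a type I edge
   lies in every perfect matching through e1, and two of them cannot meet at x.

   By Hall's theorem, H - e is matching covered iff |N(X)| > |X| for every
   nonempty proper X in P.  For a type II edge e = xy this fails at some X
   containing x whose neighbourhood in H - e misses y.  Given three type II
   edges at x, submodularity of |N| forces any two such sets to cover P, which
   makes the sets of vertices outside P unreached by them pairwise disjoint.
   But a perfect matching of the brick minus x and a vertex of P outside X shows
   that each of them contains an end of the doubleton edge lying outside P. *)

(* lia's preprocessing chokes on the set-valued context: keep only the
   arithmetic hypotheses and abstract every cardinal into a number first. *)
Ltac card_lia :=
  repeat match goal with
  | H : is_true (_ <= _) |- _ => revert H
  | H : @eq nat _ _ |- _ => revert H
  end;
  repeat match goal with |- context [#|?A|] => generalize #|A| end;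
  repeat match goal with H : _ |- _ => clear H end;
  lia.

Section Hall.
Variables (T : finType) (r : rel T).
Implicit Types A B X Y : {set T}.

Definition nbhd B X : {set T} := [set b in B | [exists a in X, r a b]].

Definition matching A B (g : T -> T) : Prop :=
  {in A &, injective g} /\ {in A, forall a, g a \in B /\ r a (g a)}.

Definition matchable A B : Prop := exists g, matching A B g.

Definition hall_condition A B : Prop := forall X, X \subset A -> #|X| <= #|nbhd B X|.

Lemma nbhdP B X b : reflect (b \in B /\ exists2 a, a \in X & r a b) (b \in nbhd B X).
Proof.
rewrite inE; apply: (iffP andP) => [[-> /exists_inP[a aX rab]]|[-> [a aX rab]]].
  by split => //; exists a.
by split => //; apply/exists_inP; exists a.
Qed.

Lemma nbhd_sub B X : nbhd B X \subset B.
Proof. by apply/subsetP=> b /nbhdP[]. Qed.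

Lemma nbhdS B X Y : X \subset Y -> nbhd B X \subset nbhd B Y.
Proof.
move=> sXY; apply/subsetP=> b /nbhdP[bB [a aX rab]]; apply/nbhdP; split=> //.
by exists a; rewrite ?(subsetP sXY).
Qed.

Lemma matchable0 B : matchable set0 B.
Proof. by exists id; split=> [a b|a]; rewrite inE. Qed.

Lemma matching_extend A B a0 b0 g : b0 \in B -> r a0 b0 ->
  matching (A :\ a0) (B :\ b0) g ->
  matching A B (fun a => if a == a0 then b0 else g a).
Proof.
move=> b0B ra0b0 [ginj gB]; have in_A' a : a \in A -> a != a0 -> a \in A :\ a0.
  by rewrite in_setD1 => aA ->.
have gb0 a : a \in A -> a != a0 -> g a != b0.
  by move=> aA na; have [] := gB a (in_A' a aA na); rewrite in_setD1 => /andP[].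
split=> [a b aA bA|a aA] /=.
  case: eqP => [->|/eqP na]; case: eqP => [->|/eqP nb] //.
  - by move/esym/eqP; rewrite (negbTE (gb0 b bA nb)).
  - by move/eqP; rewrite (negbTE (gb0 a aA na)).
  - by apply: ginj; apply: in_A'.
case: eqP => [->//|/eqP na]; have [gaB rga] := gB a (in_A' a aA na).
by split=> //; move: gaB; rewrite in_setD1 => /andP[].
Qed.

Lemma matchable_nbhd A B : matchable A B -> matchable A (nbhd B A).
Proof.
move=> [g [ginj gB]]; exists g; split=> // a aA; have [gaB rag] := gB a aA.
by split=> //; apply/nbhdP; split=> //; exists a.
Qed.

Lemma matchableU A1 A2 B1 B2 : [disjoint B1 & B2] ->
  matchable A1 B1 -> matchable A2 B2 -> matchable (A1 :|: A2) (B1 :|: B2).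
Proof.
move=> dB [g1 [inj1 h1]] [g2 [inj2 h2]].
have g2B a : a \in A1 :|: A2 -> a \notin A1 -> g2 a \in B2 /\ r a (g2 a).
  by rewrite inE => /orP[-> //|aA2] _; apply: h2.
have g12 a b : a \in A1 -> b \in A1 :|: A2 -> b \notin A1 -> g1 a != g2 b.
  move=> aA1 bA bA1; apply: contraTneq dB => eab; apply/pred0Pn; exists (g1 a).
  by rewrite /= (h1 a aA1).1 eab (g2B b bA bA1).1.
exists (fun a => if a \in A1 then g1 a else g2 a); split=> [a b aA bA|a aA] /=.
  case: ifP => aA1; case: ifP => bA1.
  - exact: inj1.
  - by move/eqP; rewrite (negbTE (g12 _ _ aA1 bA (negbT bA1))).
  - by move/esym/eqP; rewrite (negbTE (g12 _ _ bA1 aA (negbT aA1))).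
  - by apply: inj2; move: aA bA; rewrite !inE aA1 bA1.
case: ifP => aA1; first by have [? ?] := h1 a aA1; rewrite inE; split=> //; apply/orP; left.
by have [? ?] := g2B a aA (negbT aA1); rewrite inE; split=> //; apply/orP; right.
Qed.

Lemma hall_condition_tight A B X : hall_condition A B -> X \subset A ->
  #|nbhd B X| <= #|X| -> hall_condition (A :\: X) (B :\: nbhd B X).
Proof.
move=> hB sXA tX Y sY.
have dXY : [disjoint X & Y].
  by apply/pred0P=> z /=; apply/andP=> -[zX /(subsetP sY)]; rewrite inE zX.
have := hB (X :|: Y); rewrite subUset sXA (subset_trans sY (subsetDl _ _)) => /(_ isT).
rewrite cardsU (disjoint_setI0 dXY) cards0 subn0.
have sub : nbhd B (X :|: Y) :\: nbhd B X \subset nbhd (B :\: nbhd B X) Y.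
  apply/subsetP=> b; rewrite inE => /andP[bX /nbhdP[bB [a]]].
  rewrite inE => /orP[aX rab|aY rab].
    by move/negP: bX; case; apply/nbhdP; split=> //; exists a.
  by apply/nbhdP; rewrite inE bX bB; split=> //; exists a.
have := subset_leq_card sub; rewrite cardsD (setIidPr (nbhdS _ (subsetUl X Y))).
card_lia.
Qed.

Lemma hall_condition_slack A B a0 b0 : a0 \in A -> b0 \in B ->
  (forall X, X \subset A -> X != set0 -> X != A -> #|X| < #|nbhd B X|) ->
  hall_condition (A :\ a0) (B :\ b0).
Proof.
move=> a0A b0B hB Y sY; have [->|nzY] := eqVneq Y set0; first by rewrite cards0.
have sYA : Y \subset A := subset_trans sY (subsetDl _ _).
have nYA : Y != A by apply: contraTneq sY => ->; apply/subsetPn; exists a0; rewrite ?inE ?eqxx.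
have sub : nbhd B Y :\ b0 \subset nbhd (B :\ b0) Y.
  by apply/subsetP=> b; rewrite !inE => /andP[-> /andP[-> ->]].
have := subset_leq_card sub; have := cardsD1 b0 (nbhd B Y); have := hB Y sYA nzY nYA.
card_lia.
Qed.

Theorem hall_marriage A B : hall_condition A B -> matchable A B.
Proof.
move: {2}#|A| (leqnn #|A|) => n; elim: n A B => [|n IH] A B.
  by rewrite leqn0 cards_eq0 => /eqP-> _; apply: matchable0.
move=> cA hB; have [->|nzA] := eqVneq A set0; first exact: matchable0.
have [/existsP[X /and4P[sXA nzX nXA tX]]|slack] :=
  boolP [exists X : {set T}, [&& X \subset A, X != set0, X != A & #|nbhd B X| <= #|X|]].
  have ltXA : #|X| < #|A| by rewrite proper_card // properEneq nXA sXA.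
  have cAX : #|A :\: X| <= n.
    have := cardsD A X; rewrite (setIidPr sXA) -card_gt0 in nzX *; card_lia.
  have mX : matchable X (nbhd B X).
    by apply/matchable_nbhd/IH => [|Y sY]; [card_lia|apply: hB (subset_trans sY sXA)].
  have mAX := IH _ _ cAX (hall_condition_tight hB sXA tX).
  have -> : A = X :|: A :\: X by rewrite -{1}(setID A X) (setIidPr sXA).
  have -> : B = nbhd B X :|: B :\: nbhd B X.
    by rewrite -{1}(setID B (nbhd B X)) (setIidPr (nbhd_sub _ _)).
  by apply: matchableU mX mAX; apply/pred0P=> b /=; rewrite in_setD; case: (b \in nbhd B X).
have {}slack X : X \subset A -> X != set0 -> X != A -> #|X| < #|nbhd B X|.
  move=> sXA nzX nXA; rewrite ltnNge; apply: contraNN slack => tX.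
  by apply/existsP; exists X; rewrite sXA nzX nXA.
have [a0 a0A] := set0Pn _ nzA.
have : 0 < #|nbhd B [set a0]| by have := hB [set a0]; rewrite sub1set a0A cards1 => /(_ isT).
rewrite card_gt0 => /set0Pn[b0 /nbhdP[b0B [a /set1P-> ra0b0]]].
have cA' : #|A :\ a0| <= n by move: cA; rewrite (cardsD1 a0 A) a0A; card_lia.
have [g mA'] := IH _ _ cA' (hall_condition_slack a0A b0B slack).
by eexists; apply: matching_extend mA'.
Qed.

End Hall.

Section Graph.
Variables (V E : finType) (u v : E -> V).
Hypothesis loopless : forall e, u e != v e.
Local Notation adj := (adj u v).
Local Notation pm := (perfect_matching u v).
Local Notation incident := (incident u v).
Implicit Types (F M : {set E}) (S X Y Z : {set V}) (a b y z : V) (e f : E).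

Definition joins e a b := ((u e == a) && (v e == b)) || ((v e == a) && (u e == b)).

Definition other_end e a := if u e == a then v e else u e.

Definition nb F X := nbhd (adj F) [set: V] X.

Lemma adjP F a b : reflect (exists2 e, e \in F & joins e a b) (adj F a b).
Proof. by apply: (iffP exists_inP) => -[e eF jab]; exists e. Qed.

Lemma joins_sym e a b : joins e a b = joins e b a.
Proof. by rewrite /joins orbC [_ && (v e == a)]andbC [_ && (u e == a)]andbC. Qed.

Lemma adj_sym F : symmetric (adj F).
Proof. by move=> a b; apply/adjP/adjP => -[e eF jab]; exists e; rewrite // joins_sym. Qed.

Lemma adjS F F' a b : F \subset F' -> adj F a b -> adj F' a b.
Proof. by move=> sF /adjP[e eF jab]; apply/adjP; exists e; rewrite ?(subsetP sF). Qed.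

Lemma incidentP e a : reflect (a = u e \/ a = v e) (incident e a).
Proof. by apply: (iffP orP) => [[]/eqP|[]->]; rewrite ?eqxx ?orbT; auto. Qed.

Lemma joinsE e a b : joins e a b -> (a = u e /\ b = v e) \/ (a = v e /\ b = u e).
Proof. by case/orP=> /andP[/eqP-> /eqP->]; auto. Qed.

Lemma joins_incident e a b : joins e a b -> incident e a /\ incident e b.
Proof. by case/joinsE=> -[-> ->]; split; apply/incidentP; auto. Qed.

Lemma joins_incidentE e a b z : joins e a b -> incident e z -> z = a \/ z = b.
Proof. by case/joinsE=> -[-> ->] /incidentP[]->; auto. Qed.

Lemma other_end_u e : other_end e (u e) = v e. Proof. by rewrite /other_end eqxx. Qed.
Lemma other_end_v e : other_end e (v e) = u e.
Proof. by rewrite /other_end (negbTE (loopless e)). Qed.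

Lemma joins_other_end e a : incident e a -> joins e a (other_end e a).
Proof. by case/incidentP=> ->; rewrite ?other_end_u ?other_end_v /joins !eqxx ?orbT. Qed.

Lemma other_endE e a b : joins e a b -> other_end e a = b.
Proof. by case/joinsE=> -[-> ->]; rewrite ?other_end_u ?other_end_v. Qed.

Lemma incident_other_end e a : incident e a -> incident e (other_end e a).
Proof. by move/joins_other_end/joins_incident=> []. Qed.

Lemma other_end_incident e a b : incident e a -> incident e b -> a != b ->
  other_end e a = b.
Proof. by case/incidentP=> -> /incidentP[]->; rewrite ?eqxx ?other_end_u ?other_end_v. Qed.

Lemma adj_other_end F e a : e \in F -> incident e a -> adj F a (other_end e a).
Proof. by move=> eF ea; apply/adjP; exists e => //; apply: joins_other_end. Qed.

Lemma nbP F X b : reflect (exists2 a, a \in X & adj F a b) (b \in nb F X).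
Proof. by apply: (iffP (nbhdP _ _ _ _)) => [[_ //]|h]; rewrite inE. Qed.

Lemma nbS F F' X X' : F \subset F' -> X \subset X' -> nb F X \subset nb F' X'.
Proof.
move=> sF sX; apply/subsetP=> b /nbP[a aX ab]; apply/nbP.
by exists a; [apply: subsetP aX | apply: adjS ab].
Qed.

Lemma perfect_matching_uniq S F M z e f : pm S F M -> z \in S ->
  e \in M -> f \in M -> incident e z -> incident f z -> e = f.
Proof.
move=> [_ hM] zS eM fM ez fz; have /eqP/cards1P[g Mz] := hM z zS.
have : e \in [set e in M | incident e z] by rewrite inE eM ez.
have : f \in [set e in M | incident e z] by rewrite inE fM fz.
by rewrite Mz !inE => /eqP-> /eqP->.
Qed.

Lemma perfect_matching_cover S F M z : pm S F M -> z \in S ->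
  exists2 e, e \in M & incident e z.
Proof.
move=> [_ hM] zS; have /eqP/cards1P[e Mz] := hM z zS.
have : e \in [set e in M | incident e z] by rewrite Mz inE.
by rewrite inE => /andP[]; exists e.
Qed.

Lemma edges_avoiding_incident F X e z : e \in edges_avoiding u v F X -> z \in X ->
  ~~ incident e z.
Proof.
rewrite inE => /and3P[_ uX vX] zX; apply/negP=> /incidentP[] ze.
  by rewrite -ze zX in uX.
by rewrite -ze zX in vX.
Qed.

Lemma perfect_matchingS S F F' M : F \subset F' -> pm S F M -> pm S F' M.
Proof. by move=> sF [sM hM]; split=> //; apply: subset_trans sF. Qed.

Lemma matching_covered_pm S F : matching_covered u v S F -> exists M, pm S F M.
Proof.
case=> conn [/card_gt1P[a [b [aS bS ab]]] adm].
have /connectP[[|c p] /= pth eab] := conn a b aS bS; first by rewrite eab eqxx in ab.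
case/andP: pth => /adjP[f fF _] _.
by have [M [hM _]] := adm f fF; exists M.
Qed.

Lemma card_le_matched S F M Y Z : pm S F M -> Y \subset S -> Z \subset S ->
  [disjoint Y & Z] ->
  (forall y e, y \in Y -> e \in M -> incident e y -> other_end e y \in Z) ->
  #|Y| <= #|Z|.
Proof.
move=> hM sY sZ dYZ hZ.
pose mate y := if [pick e in M | incident e y] is Some e then other_end e y else y.
have mateP y : y \in Y -> exists2 e, e \in M & incident e y /\ mate y = other_end e y.
  move=> yY; rewrite /mate; case: pickP => [e /andP[eM ey]|none]; first by exists e.
  have [e eM ey] := perfect_matching_cover hM (subsetP sY y yY).
  by move: (none e); rewrite eM ey.
have mate_inj : {in Y &, injective mate}.
  move=> y1 y2 y1Y y2Y; have [e1 e1M [e1y1 ->]] := mateP y1 y1Y.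
  have [e2 e2M [e2y2 ->]] := mateP y2 y2Y => same.
  have zZ := hZ y1 e1 y1Y e1M e1y1.
  have e12 : e1 = e2.
    apply: (perfect_matching_uniq hM (subsetP sZ _ zZ) e1M e2M).
      exact: incident_other_end.
    by rewrite same; apply: incident_other_end.
  subst e2; apply: contraTeq dYZ => y12; apply/pred0Pn; exists (other_end e1 y1).
  by rewrite /= zZ same (other_end_incident e2y2 e1y1) ?y1Y // eq_sym.
rewrite -(card_in_imset mate_inj); apply/subset_leq_card/subsetP => _ /imsetP[y yY ->].
by have [e eM [ey ->]] := mateP y yY; apply: hZ.
Qed.

End Graph.

Section Ends.
Variables (V E : finType) (u v : E -> V).
Hypothesis loopless : forall e, u e != v e.
Local Notation pm := (perfect_matching u v).
Local Notation incident := (incident u v).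
Implicit Types (F M : {set E}) (P : {set V}) (e : E).

Definition ends P e : nat := (u e \in P) + (v e \in P).
Definition crossing P e : bool := (u e \in P) != (v e \in P).
Definition inside P e : bool := (u e \in P) && (v e \in P).

Lemma endsE P e : ends P e = (inside P e).*2 + crossing P e.
Proof. by rewrite /ends /inside /crossing; case: (u e \in P); case: (v e \in P). Qed.

Lemma crossingC P e : crossing (~: P) e = crossing P e.
Proof. by rewrite /crossing !inE; case: (u e \in P); case: (v e \in P). Qed.

Lemma inside_crossing P e : ~~ crossing P e -> inside P e || inside (~: P) e.
Proof. by rewrite /crossing /inside !inE; case: (u e \in P); case: (v e \in P). Qed.

Lemma insideC P e : inside P e -> ~~ inside (~: P) e.
Proof. by rewrite /inside !inE => /andP[-> ->]. Qed.

Lemma sum_nat_bool (T : finType) (A : {set T}) (p : pred T) :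
  \sum_(t in A) p t = #|[set t in A | p t]|.
Proof.
rewrite -sum1_card big_mkcond [RHS]big_mkcond /=; apply: eq_bigr => t _.
by rewrite inE; case: (t \in A); case: (p t).
Qed.

(* Double counting of the pairs (z, e) with z in P and e the edge of M at z. *)
Lemma card_pm_ends F M P : pm [set: V] F M -> #|P| = \sum_(e in M) ends P e.
Proof.
move=> [_ hM]; rewrite -sum1_card.
rewrite (eq_bigr (fun z => \sum_(e in M) incident e z)); last first.
  by move=> z _; rewrite sum_nat_bool hM ?inE.
rewrite exchange_big /=; apply: eq_bigr => e _.
have incidentE z : (incident e z : nat) = (u e == z) + (v e == z).
  have := loopless e; rewrite /Defs.incident.
  by case: (u e =P z) => [->|]; case: (v e =P z) => [->|]; rewrite ?eqxx.
rewrite (eq_bigr _ (fun z _ => incidentE z)) big_split /= /ends.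
have indicator a : \sum_(z in P) (a == z : nat) = (a \in P).
  case aP: (a \in P); last by rewrite big1 // => z zP; case: eqP aP => // ->; rewrite zP.
  rewrite (bigD1 a) //= eqxx big1 // => z /andP[_]; by rewrite eq_sym => /negbTE->.
by rewrite !indicator.
Qed.

Lemma card_pm_inside F M P : pm [set: V] F M ->
  #|P| = #|[set e in M | inside P e]|.*2 + #|[set e in M | crossing P e]|.
Proof.
move/card_pm_ends->; rewrite (eq_bigr _ (fun e _ => endsE P e)) big_split /=.
rewrite -!sum_nat_bool; under eq_bigr do rewrite -mul2n.
by rewrite -big_distrr /= mul2n.
Qed.

Lemma pm_inside_balanced F M P : pm [set: V] F M -> #|P| = #|~: P| ->
  #|[set e in M | inside P e]| = #|[set e in M | inside (~: P) e]|.
Proof.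
move=> hM; rewrite (card_pm_inside P hM) (card_pm_inside (~: P) hM).
have -> : [set e in M | crossing (~: P) e] = [set e in M | crossing P e].
  by apply/setP=> e; rewrite !inE crossingC.
by move/addIn/double_inj.
Qed.

End Ends.

Section BipartiteHall.
Variables (V E : finType) (u v : E -> V).
Hypothesis loopless : forall e, u e != v e.
Variables (F : {set E}) (P : {set V}).
Hypothesis crossF : forall e, e \in F -> crossing u v P e.
Hypothesis balanced : #|P| = #|~: P|.
Local Notation adj := (adj u v F).
Local Notation nb := (nb u v F).
Local Notation pm := (perfect_matching u v).
Local Notation joins := (joins u v).
Implicit Types (M : {set E}) (X Y : {set V}) (a b : V).

Definition hall_strict : Prop :=
  forall X, X \subset P -> X != set0 -> X != P -> #|X| < #|nb X|.

Lemma adj_crossing a b : adj a b -> (a \in P) != (b \in P).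
Proof.
case/adjP=> e /crossF; rewrite /crossing => cross /joinsE[][-> ->] //.
by rewrite eq_sym.
Qed.

Lemma adj_inC a b : adj a b -> a \in P -> b \in ~: P.
Proof. by move/adj_crossing; rewrite inE; case: (a \in P); case: (b \in P). Qed.

Lemma adj_inP a b : adj a b -> a \in ~: P -> b \in P.
Proof. by move/adj_crossing; rewrite inE; case: (a \in P); case: (b \in P). Qed.

Lemma nb_subC X : X \subset P -> nb X \subset ~: P.
Proof. by move=> sXP; apply/subsetP=> b /nbP[a /(subsetP sXP) aP /adj_inC]; apply. Qed.

Lemma perfect_matching_of_matching (g : V -> V) (edge : V -> E) :
  matching adj P (~: P) g ->
  (forall a, a \in P -> edge a \in F /\ joins (edge a) a (g a)) ->
  pm [set: V] F (edge @: P).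
Proof.
move=> [ginj gQ] hedge.
have hg a : a \in P -> [/\ edge a \in F, g a \in ~: P & joins (edge a) a (g a)].
  by move=> aP; have [? ?] := hedge a aP; have [? _] := gQ a aP.
split; first by apply/subsetP=> _ /imsetP[a /hg[eF _ _] ->].
have gP : g @: P = ~: P.
  apply/eqP; rewrite eqEcard card_in_imset // -balanced leqnn andbT.
  by apply/subsetP=> _ /imsetP[a /hg[] _ ? _ ->].
have mate z : exists2 a, a \in P & z = a \/ z = g a.
  by case zP: (z \in P); [exists z; auto | have /imsetP[a aP ->] : z \in g @: P;
    [rewrite gP inE zP | exists a; auto]].
move=> z _; have [a aP za] := mate z; apply/eqP/cards1P; exists (edge a).
apply/setP=> e; rewrite !inE; apply/andP/eqP => [[/imsetP[b bP ->] bz]|->].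
  have [_ gbQ jb] := hg b bP; have [_ gaQ ja] := hg a aP.
  case: (joins_incidentE jb bz) => zb; case: za => za; rewrite za in zb.
  - by rewrite zb.
  - by move: gaQ; rewrite zb inE bP.
  - by move: gbQ; rewrite -zb inE aP.
  - by rewrite (ginj _ _ aP bP zb).
split; first exact: imset_f.
by have [_ _ /joins_incident[]] := hg a aP; case: za => ->.
Qed.

(* If |N(X)| <= |X|, connectivity gives an edge ab leaving X :|: N(X) with a in
   N(X); a perfect matching through ab maps X injectively into N(X) :\ a. *)
Lemma hall_strict_of_matching_covered : matching_covered u v [set: V] F -> hall_strict.
Proof.
move=> [conn [_ adm]] X sXP nzX nXP; rewrite ltnNge; apply/negP => le.
have NQ := nb_subC sXP.
set C := X :|: nb X.
have [p0 p0P p0X] : exists2 p0, p0 \in P & p0 \notin X.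
  by apply/subsetPn; apply: contra nXP => sPX; rewrite eqEsubset sXP.
have [x0 x0X] := set0Pn _ nzX.
have [/existsP[a /existsP[b /and3P[ab aC bC]]]|closedC] :=
  boolP [exists a, exists b, [&& adj a b, a \in C & b \notin C]]; last first.
  have clC : closed adj C.
    move=> a b ab; apply/idP/idP => [aC|bC]; apply: contraNT closedC => nC.
      by apply/existsP; exists a; apply/existsP; exists b; rewrite ab aC.
    by apply/existsP; exists b; apply/existsP; exists a; rewrite adj_sym ab bC.
  have := closed_connect clC (conn x0 p0 (in_setT _) (in_setT _)).
  rewrite !in_setU x0X (negbTE p0X) /= => /esym p0N.
  by have := subsetP NQ p0 p0N; rewrite inE p0P.
have aN : a \in nb X.
  move: aC bC; rewrite !in_setU => /orP[aX|//]; rewrite negb_or => /andP[_ /nbP[]].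
  by exists a.
have aQ : a \notin P by have := subsetP NQ a aN; rewrite inE.
have bX : b \notin X by move: bC; rewrite in_setU negb_or => /andP[].
have bP : b \in P by apply: (adj_inP ab); rewrite inE.
case/adjP: ab => f fF jf; have [M [hM fM]] := adm f fF.
have : #|X| <= #|nb X :\ a|.
  apply: (card_le_matched loopless hM (subsetT _) (subsetT _)).
    apply/pred0P=> z /=; rewrite in_setD1; apply/negP => /and3P[zX _ zN].
    by have := subsetP NQ z zN; rewrite inE (subsetP sXP z zX).
  move=> y e yX eM ey; rewrite in_setD1; apply/andP; split.
    apply: contraNneq bX => ya; have ef : e = f.
      apply: (perfect_matching_uniq hM (in_setT a) eM fM).
        by rewrite -ya; apply: incident_other_end.
      by case: (joins_incident jf).
    subst e; case: (joins_incidentE jf ey) => yab; last by rewrite -yab.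
    by move: aQ; rewrite -yab (subsetP sXP y yX).
  by apply/nbP; exists y => //; apply: adj_other_end (subsetP hM.1 e eM) ey.
by move: le; rewrite (cardsD1 a (nb X)) aN; card_lia.
Qed.

Lemma nbhdC X : X \subset P -> nbhd adj (~: P) X = nb X.
Proof.
move=> sXP; apply/setP=> b; apply/nbhdP/nbP=> [[_ //]|[a aX ab]].
by split; [apply: adj_inC ab (subsetP sXP a aX) | exists a].
Qed.

Lemma crossing_ends e : e \in F -> exists p q, [/\ p \in P, q \in ~: P & joins e p q].
Proof.
move/crossF; rewrite /crossing; case uP: (u e \in P); case vP: (v e \in P) => // _.
  by exists (u e), (v e); rewrite inE vP /joins !eqxx.
by exists (v e), (u e); rewrite inE uP /joins !eqxx orbT.
Qed.

Lemma admissible_of_hall_strict : hall_strict ->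
  forall f, f \in F -> admissible u v [set: V] F f.
Proof.
move=> hs f fF; have [p [q [pP qQ jf]]] := crossing_ends fF.
have hall : hall_condition adj (P :\ p) (~: P :\ q).
  by apply: hall_condition_slack => // X sXP; rewrite nbhdC //; apply: hs.
have pq : adj p q by apply/adjP; exists f.
have [g /(matching_extend qQ pq) mg] := hall_marriage hall.
set g' := fun a => _ in mg.
pose edge a := if a == p then f else odflt f [pick e in F | joins e a (g a)].
exists (edge @: P); split; last by apply/imsetP; exists p; rewrite // /edge eqxx.
apply: (perfect_matching_of_matching mg) => a aP; rewrite /edge /g'.
case: eqP => [-> //|/eqP ap]; have [_ /adjP[e eF je]] := mg.2 a aP.
rewrite /g' (negbTE ap) in je.
by case: pickP => [e' /andP[]|/(_ e)]; rewrite ?eF ?je.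
Qed.

(* The component C of p0 meets P in a set X with N(X) inside C; the perfect
   matching maps the Q-vertices of C into X, so X cannot be a proper subset. *)
Lemma hall_strict_reach M p0 : pm [set: V] F M -> hall_strict -> p0 \in P ->
  forall z, connect adj p0 z.
Proof.
move=> hM hs p0P; set C := [set z | connect adj p0 z].
have mate_adj z : exists2 w, adj z w & (w \in P) != (z \in P).
  have [e eM ez] := perfect_matching_cover hM (in_setT z).
  have zw := adj_other_end loopless (subsetP hM.1 e eM) ez.
  by exists (other_end u v e z); rewrite // eq_sym adj_crossing.
have PC : P \subset C.
  apply: contraT => nPC; set X := P :&: C.
  have nXP : X != P by apply: contra nPC => /eqP <-; apply: subsetIr.
  have nzX : X != set0 by apply/set0Pn; exists p0; rewrite !inE p0P connect0.
  have sNX : nb X \subset ~: P :&: C.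
    apply/subsetP=> b /nbP[a]; rewrite !inE => /andP[aP ca] ab.
    rewrite (connect_trans ca (connect1 ab)) andbT.
    by have := adj_crossing ab; rewrite aP; case: (b \in P).
  have : #|~: P :&: C| <= #|X|.
    apply: (card_le_matched loopless hM (subsetT _) (subsetT _)).
      by apply/pred0P=> z /=; rewrite !inE; case: (z \in P); rewrite ?andbF.
    move=> y e; rewrite !inE => /andP[yP cy] eM ey.
    have ad := adj_other_end loopless (subsetP hM.1 e eM) ey.
    rewrite (connect_trans cy (connect1 ad)) andbT.
    by have := adj_crossing ad; rewrite (negbTE yP); case: (_ \in P).
  have := subset_leq_card sNX; have := hs X (subsetIl _ _) nzX nXP; card_lia.
move=> z; case zP: (z \in P); first by have := subsetP PC z zP; rewrite inE.
have [w zw] := mate_adj z; rewrite zP; case wP: (w \in P) => // _.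
have := subsetP PC w wP; rewrite inE => p0w.
by apply: connect_trans p0w (connect1 _); rewrite adj_sym.
Qed.

Lemma matching_covered_of_hall_strict : 2 <= #|P| -> hall_strict ->
  matching_covered u v [set: V] F.
Proof.
move=> P2 hs; have adm := admissible_of_hall_strict hs.
have [p0 p0P] : exists p0, p0 \in P by apply/set0Pn; rewrite -card_gt0; card_lia.
have [b0 /nbP[_ /set1P-> /adjP[f0 f0F _]]] : exists b0, b0 \in nb [set p0].
  apply/set0Pn; rewrite -card_gt0; apply: leq_trans (hs _ _ _ _); rewrite ?cards1 //.
  - by rewrite sub1set.
  - by apply/set0Pn; exists p0; rewrite inE.
  - by apply: contraTneq P2 => <-; rewrite cards1.
have [M0 [hM0 _]] := adm f0 f0F.
have reach := hall_strict_reach hM0 hs p0P.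
split; [move=> a b _ _ | split; last by move=> f /adm].
  by apply: connect_trans (reach b); rewrite (sym_connect_sym (@adj_sym _ _ u v F)).
by have := cardsC P; rewrite cardsT; card_lia.
Qed.

End BipartiteHall.

Section ThreeConnected.
Variables (V E : finType) (u v : E -> V).
Hypothesis loopless : forall e, u e != v e.
Local Notation adj := (adj u v).

(* Every vertex a reaches a fixed w off e inside G - z, where z is an end of e
   other than a; the edges of G - z all differ from e. *)
Lemma connected_setD1 F e : k_connected u v 3 [set: V] F ->
  connected_graph u v [set: V] (F :\ e).
Proof.
move=> [V3 hk].
have [w _ wn] : exists2 w, w \in [set: V] & w \notin [set u e; v e].
  apply/subsetPn; apply: contraTN V3 => sT; rewrite -leqNgt.
  by rewrite (leq_trans (subset_leq_card sT)) // cards2; case: (_ != _).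
have reach a : connect (adj (F :\ e)) a w /\ connect (adj (F :\ e)) w a.
  pose z := if a == u e then v e else u e.
  have za : z != a.
    by rewrite /z; case: (a =P u e) => [->|/eqP]; rewrite eq_sym ?loopless.
  have zw : z != w.
    by apply: contraNneq wn => <-; rewrite /z !inE; case: ifP; rewrite eqxx ?orbT.
  have ez : e \notin edges_avoiding u v F [set z].
    by rewrite !inE /z; case: ifP; rewrite eqxx ?andbF.
  have sub : subrel (adj (edges_avoiding u v F [set z])) (connect (adj (F :\ e))).
    move=> x y /adjS xy; apply/connect1/xy/subsetP=> f fz; rewrite in_setD1.
    have fe : f != e by apply: contraNneq ez => <-.
    by move: fz; rewrite inE fe => /andP[].
  have conn := hk [set z] (subsetT _) (ltac:(by rewrite cards1)).
  by split; apply: (connect_sub sub); apply: conn; rewrite !inE ?(eq_sym a) ?(eq_sym w) ?za ?zw.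
by move=> a b _ _; apply: connect_trans (reach a).1 (reach b).2.
Qed.

End ThreeConnected.

Section Doubleton.
Variables (V E : finType) (u v : E -> V).
Hypothesis loopless : forall e, u e != v e.
Variables (e1 e2 : E) (P : {set V}).
Hypothesis Gnb : near_bipartite u v [set: V] [set: E].
Hypothesis hdb : removable_doubleton u v [set: V] [set: E] e1 e2.
Local Notation H := ([set: E] :\ e1 :\ e2).
Local Notation D := [set e1; e2].
Hypothesis crossH : forall e, e \in H -> crossing u v P e.
Local Notation pm := (perfect_matching u v [set: V]).
Local Notation inside := (inside u v).
Implicit Types (M : {set E}) (S : {set V}) (e f g h : E).

Lemma notin_doubleton e : e \notin D -> e \in H.
Proof. by rewrite !inE negb_or => /andP[-> ->]. Qed.

Lemma doubleton_cases f g h : f \in D -> g \in D -> h \in D -> f != h -> g = f \/ g = h.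
Proof. by rewrite !inE => /orP[]/eqP-> /orP[]/eqP-> /orP[]/eqP->; rewrite ?eqxx; auto. Qed.

Lemma balanced_sides : #|P| = #|~: P|.
Proof.
have [_ _ _ _ /matching_covered_pm[M hM]] := hdb.
have crossM S : (forall e, e \in H -> crossing u v S e) ->
    #|S| = #|[set e in M | crossing u v S e]|.
  move=> crossS; rewrite (card_pm_inside loopless S hM).
  suff -> : [set e in M | inside S e] = set0 by rewrite cards0.
  apply/setP=> e; rewrite !inE; case eM: (e \in M) => //=.
  have := crossS e (subsetP hM.1 e eM); rewrite /crossing /inside.
  by case: (u e \in S); case: (v e \in S).
rewrite (crossM P crossH) (crossM (~: P)) => [|e /crossH]; last by rewrite crossingC.
by apply: eq_card => e; rewrite !inE crossingC.
Qed.

Lemma doubleton_partner S M f :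
  (forall e, e \in H -> crossing u v S e) -> #|S| = #|~: S| ->
  pm [set: E] M -> f \in M -> inside S f -> exists2 g, g \in M :&: D & inside (~: S) g.
Proof.
move=> crossS balS hM fM fS.
have : 0 < #|[set e in M | inside (~: S) e]|.
  rewrite -(pm_inside_balanced loopless hM balS) card_gt0.
  by apply/set0Pn; exists f; rewrite inE fM.
rewrite card_gt0 => /set0Pn[g]; rewrite inE => /andP[gM gQ]; exists g => //.
rewrite inE gM; apply: contraTT gQ => /notin_doubleton/crossS.
by rewrite -crossingC /crossing /inside; case: (u g \in ~: S); case: (v g \in ~: S).
Qed.

Lemma doubleton_opposite M f : pm [set: E] M -> f \in M -> ~~ crossing u v P f ->
  exists2 g, g \in M :&: D & if inside P f then inside (~: P) g else inside P g.
Proof.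
move=> hM fM /inside_crossing; case fP: (inside P f) => /= fQ.
  exact: doubleton_partner crossH balanced_sides hM fM fP.
rewrite -(setCK P); apply: doubleton_partner hM fM fQ; last by rewrite setCK balanced_sides.
by move=> e /crossH; rewrite crossingC.
Qed.

Lemma doubleton_opposite_neq f g : ~~ crossing u v P f ->
  (if inside P f then inside (~: P) g else inside P g) -> g != f.
Proof.
move=> /inside_crossing fPQ; case: ifP fPQ => fP /=.
  by move=> _ gQ; apply: contraTneq gQ => ->; apply: insideC.
by move=> fQ gP; apply: contraTneq gP => ->; rewrite fP.
Qed.

Lemma doubleton_opposite_crossing f g :
  (if inside P f then inside (~: P) g else inside P g) -> ~~ crossing u v P g.
Proof.
by case: ifP => _; rewrite /crossing /inside ?inE; case: (u g \in P); case: (v g \in P).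
Qed.

Lemma doubleton_not_crossing f : f \in D -> ~~ crossing u v P f.
Proof.
move=> fD; apply/negP => fP; have [[_ [_ adm]] nbip _] := Gnb.
have [h hP] : exists h, ~~ crossing u v P h.
  apply/existsP; apply: contraT => /existsPn allP; case: nbip.
  by exists P => e _; have := allP e; rewrite negbK.
have hD : h \in D by apply: contraNT hP => /notin_doubleton/crossH ->.
have [M [hM hM']] := adm h (in_setT h).
have [g /setIP[_ gD] gh] := doubleton_opposite hM hM' hP.
have fh : f != h by apply: contraTneq fP => ->.
case: (doubleton_cases fD gD hD fh) => [gf|/eqP].
  by move: (doubleton_opposite_crossing gh); rewrite gf fP.
by rewrite (negbTE (doubleton_opposite_neq hP gh)).
Qed.

Lemma perfect_matching_doubleton M f : pm [set: E] M -> f \in M -> f \in D ->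
  D \subset M.
Proof.
move=> hM fM fD; have fP := doubleton_not_crossing fD.
have [g /setIP[gM gD] gf] := doubleton_opposite hM fM fP.
have fg : f != g by rewrite eq_sym (doubleton_opposite_neq fP gf).
by apply/subsetP=> h hD; case: (doubleton_cases fD hD gD fg) => ->.
Qed.

Lemma doubleton_sides : exists2 eQ, eQ \in D & forall f, f \in D -> f != eQ -> inside P f.
Proof.
have e1D : e1 \in D by rewrite !inE eqxx.
have [[_ [_ adm]] _ _] := Gnb; have [M [hM e1M]] := adm e1 (in_setT e1).
have e1P := doubleton_not_crossing e1D.
have [g /setIP[_ gD] ge1] := doubleton_opposite hM e1M e1P.
have e1g : e1 != g by rewrite eq_sym (doubleton_opposite_neq e1P ge1).
move: ge1; case: ifP => e1in gin.
  exists g => // f fD; case: (doubleton_cases e1D fD gD e1g) => ->; rewrite ?eqxx //.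
exists e1 => // f fD; rewrite eq_sym in e1g.
by case: (doubleton_cases gD fD e1D e1g) => ->; rewrite ?eqxx.
Qed.

End Doubleton.

Section TypeI.
Variables (V E : finType) (u v : E -> V).
Hypothesis loopless : forall e, u e != v e.
Variables (e1 e2 : E) (P : {set V}) (x : V).
Hypothesis Gnb : near_bipartite u v [set: V] [set: E].
Hypothesis Gbrick : brick u v [set: V] [set: E].
Hypothesis hdb : removable_doubleton u v [set: V] [set: E] e1 e2.
Local Notation H := ([set: E] :\ e1 :\ e2).
Local Notation D := [set e1; e2].
Hypothesis crossH : forall e, e \in H -> crossing u v P e.
Local Notation pm := (perfect_matching u v [set: V]).
Local Notation incident := (incident u v).
Implicit Types (M T : {set E}) (e f : E).

Lemma typeI_in_pm e M : typeI u v [set: V] [set: E] e1 e2 e -> pm [set: E] M ->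
  e1 \in M -> e \in M.
Proof.
case=> _ [_ nrem] [_ [_ [_ admHe]]] hM e1M; apply/negPn/negP => eM; apply: nrem.
have sM : M \subset [set: E] :\ e.
  by apply/subsetP=> f fM; rewrite in_setD1 in_setT andbT; apply: contraNneq eM => <-.
have [[_ [G2 _]] _ _] := Gnb; have [G3 _ _] := Gbrick.
split=> //; split; first exact: connected_setD1.
split=> // f; rewrite in_setD1 => /andP[fe _].
have [fD|fD] := boolP (f \in D).
  exists M; split; first by split=> //; case: hM.
  have e1D : e1 \in D by rewrite !inE eqxx.
  exact: subsetP (perfect_matching_doubleton loopless Gnb hdb crossH hM e1M e1D) f fD.
have [M' [hM' fM']] := admHe f (ltac:(by rewrite in_setD1 fe notin_doubleton)).
exists M'; split => //; apply: perfect_matchingS hM'.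
by apply/subsetP=> g; rewrite !inE => /and3P[->].
Qed.

Lemma typeI_at_most_one T :
  (forall e, e \in T -> incident e x /\ typeI u v [set: V] [set: E] e1 e2 e) -> #|T| <= 1.
Proof.
move=> hT; rewrite leqNgt; apply/negP => /card_gt1P[a [b [aT bT ab]]].
have [[_ [_ adm]] _ _] := Gnb; have [M [hM e1M]] := adm e1 (in_setT e1).
have [ax aI] := hT a aT; have [bx bI] := hT b bT.
have := perfect_matching_uniq hM (in_setT x) (typeI_in_pm aI hM e1M) (typeI_in_pm bI hM e1M).
by move=> /(_ ax bx)/eqP; rewrite (negbTE ab).
Qed.

End TypeI.

Section TypeII.
Variables (V E : finType) (u v : E -> V).
Hypothesis loopless : forall e, u e != v e.
Variables (e1 e2 : E) (P : {set V}) (x : V).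
Hypothesis Gbrick : brick u v [set: V] [set: E].
Hypothesis hdb : removable_doubleton u v [set: V] [set: E] e1 e2.
Local Notation H := ([set: E] :\ e1 :\ e2).
Local Notation D := [set e1; e2].
Hypothesis crossH : forall e, e \in H -> crossing u v P e.
Hypothesis xP : x \in P.
Local Notation incident := (incident u v).
Local Notation other_end := (other_end u v).
Local Notation nb := (nb u v).
Implicit Types (M T : {set E}) (X Y Z Xi Xj : {set V}) (e f : E).

Let balancedP : #|P| = #|~: P| := balanced_sides loopless hdb crossH.

Lemma hall_strictH : hall_strict u v H P.
Proof.
by apply: (hall_strict_of_matching_covered loopless crossH balancedP); case: hdb.
Qed.

Lemma incident_inP_x e a : e \in H -> incident e x -> incident e a -> a \in P -> a = x.
Proof.
move=> /crossH cross /incidentP ex /incidentP ea aP; have xP' := xP.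
by case: ex ea xP' aP => -> [] -> // xP' aP; move: cross; rewrite /crossing xP' aP.
Qed.

Lemma nb_setD1 e X b : e \in H -> incident e x -> X \subset P -> b \in nb H X ->
  b \in nb (H :\ e) X \/ (x \in X /\ b = other_end e x).
Proof.
move=> eH ex sXP /nbP[a aX /adjP[f fH jf]].
have [fe|fe] := eqVneq f e; last first.
  by left; apply/nbP; exists a => //; apply/adjP; exists f; rewrite // in_setD1 fe.
subst f; have [ea eb] := joins_incident jf.
have ax := incident_inP_x eH ex ea (subsetP sXP a aX); subst a.
by right; rewrite (other_endE loopless jf).
Qed.

Lemma nb_setD1_sub e X : e \in H -> incident e x -> X \subset P ->
  nb H X \subset other_end e x |: nb (H :\ e) X.
Proof.
move=> eH ex sXP; apply/subsetP=> b bN; rewrite in_setU1.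
by case: (nb_setD1 eH ex sXP bN) => [->|[_ ->]]; rewrite ?eqxx ?orbT.
Qed.

Lemma other_end_nb e f X : e \in H -> incident e x -> e != f -> x \in X ->
  other_end e x \in nb (H :\ f) X.
Proof.
move=> eH ex ef xX; apply/nbP; exists x => //.
by apply: (adj_other_end loopless _ ex); rewrite in_setD1 ef.
Qed.

(* A witness that H - e is not matching covered, located around x. *)
Definition deficient e X : Prop :=
  [/\ x \in X, X \subset P, X != P, #|nb (H :\ e) X| <= #|X|
    & other_end e x \notin nb (H :\ e) X].

Lemma deficient_exists e : e \in H -> incident e x -> nonremovable u v [set: V] H e ->
  exists X, deficient e X.
Proof.
move=> eH ex [_ nrem].
have crossHe f : f \in H :\ e -> crossing u v P f by rewrite in_setD1 => /andP[_ /crossH].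
have [/forallP hall|] := boolP [forall X : {set V},
   [&& X \subset P, X != set0 & X != P] ==> (#|X| < #|nb (H :\ e) X|)].
  case: nrem; split=> //; apply: (matching_covered_of_hall_strict loopless crossHe balancedP).
    have [[V3 _] _ _] := Gbrick; rewrite cardsT in V3.
    by have := cardsC P; rewrite -balancedP; card_lia.
  by move=> X sXP nzX nXP; have := hall X; rewrite sXP nzX nXP.
case/forallPn=> X; rewrite negb_imply -leqNgt => /andP[/and3P[sXP nzX nXP] le].
have lt := hall_strictH sXP nzX nXP.
have sNX : ~~ (nb H X \subset nb (H :\ e) X).
  by apply: contraTN le => /subset_leq_card; rewrite -ltnNge; apply: leq_trans.
have [xX yN] : x \in X /\ other_end e x \notin nb (H :\ e) X.
  case/subsetPn: sNX => b bN bN'.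
  case: (nb_setD1 eH ex sXP bN) => [bN''|[xX yb]]; first by rewrite bN'' in bN'.
  by rewrite -yb.
by exists X.
Qed.

Lemma card_nb_deficient e X : e \in H -> incident e x -> deficient e X ->
  #|nb H X| <= #|X|.+1.
Proof.
move=> eH ex [_ sXP _ le _]; have := subset_leq_card (nb_setD1_sub eH ex sXP).
by rewrite cardsU1; have := leq_b1 (other_end e x \notin nb (H :\ e) X); card_lia.
Qed.

(* Submodularity of |N(.)| against the strict Hall condition on Xi :|: Xj. *)
Lemma card_nb_deficientI ei ej Xi Xj :
  ei \in H -> incident ei x -> deficient ei Xi ->
  ej \in H -> incident ej x -> deficient ej Xj ->
  Xi :|: Xj != P -> #|nb H (Xi :&: Xj)| <= #|Xi :&: Xj|.+1.
Proof.
move=> eiH eix dXi ejH ejx dXj nWP.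
have Ni := card_nb_deficient eiH eix dXi; have Nj := card_nb_deficient ejH ejx dXj.
case: dXi dXj => xXi sXi _ _ _ [_ sXj _ _ _].
have nzW : Xi :|: Xj != set0 by apply/set0Pn; exists x; rewrite inE xXi.
have sWP : Xi :|: Xj \subset P by rewrite subUset sXi sXj.
have NW := hall_strictH sWP nzW nWP.
have sNW : nb H (Xi :|: Xj) \subset nb H Xi :|: nb H Xj.
  apply/subsetP=> b /nbP[a]; rewrite !in_setU => /orP[aX|aX] ab; apply/orP; [left|right];
  by apply/nbP; exists a.
have sNZ : nb H (Xi :&: Xj) \subset nb H Xi :&: nb H Xj.
  by rewrite subsetI !nbS ?subsetIl ?subsetIr.
have := subset_leq_card sNW; have := subset_leq_card sNZ.
have := cardsUI Xi Xj; have := cardsUI (nb H Xi) (nb H Xj); card_lia.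
Qed.

Lemma other_end_notin_nb e X Y : e \in H -> incident e x -> deficient e X ->
  Y \subset X -> other_end e x \notin nb H (Y :\ x).
Proof.
move=> eH ex [_ sXP _ _ yN] sYX.
have sY'X : Y :\ x \subset X := subset_trans (subsetDl _ _) sYX.
apply: contra yN => /(nb_setD1 eH ex (subset_trans sY'X sXP))[yN|[]]; last by rewrite !inE eqxx.
exact: subsetP (nbS _ _ (subxx _) sY'X) _ yN.
Qed.

Lemma deficient_other_end_neq ei ej Xi : ej \in H -> incident ej x -> ei != ej ->
  deficient ei Xi -> other_end ej x != other_end ei x.
Proof.
move=> ejH ejx eij [xXi _ _ _ yN]; apply: contraNneq yN => <-.
by apply: other_end_nb; rewrite // eq_sym.
Qed.

(* Otherwise Z := Xi :&: Xj minus x loses the two neighbours other_end ei x and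
   other_end ej x while keeping other_end ek x, against strict Hall. *)
Lemma deficient_cover ei ej ek Xi Xj :
  ei \in H -> ej \in H -> ek \in H -> incident ei x -> incident ej x -> incident ek x ->
  ei != ej -> ei != ek -> ej != ek ->
  deficient ei Xi -> deficient ej Xj -> Xi :|: Xj = P.
Proof.
move=> eiH ejH ekH eix ejx ekx eij eik ejk dXi dXj; apply/eqP; apply: contraT => nWP.
have NZ := card_nb_deficientI eiH eix dXi ejH ejx dXj nWP.
case: (dXi) (dXj) => xXi sXi _ _ _ [xXj _ _ _ _].
set Z := Xi :&: Xj in NZ *; set yi := other_end ei x; set yj := other_end ej x.
have xZ : x \in Z by rewrite inE xXi xXj.
have yZ e : e \in H -> incident e x -> other_end e x \in nb H Z.
  by move=> eH ex; apply/nbP; exists x => //; apply: adj_other_end.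
have yij : yj != yi := deficient_other_end_neq ejH ejx eij dXi.
have yk : other_end ek x \in nb H Z :\ yi :\ yj.
  rewrite !in_setD1 yZ // (deficient_other_end_neq ekH ekx eik dXi).
  by rewrite (deficient_other_end_neq ekH ekx ejk dXj).
have lt : #|Z :\ x| < #|nb H Z :\ yi :\ yj|.
  have [->|nzZ'] := eqVneq (Z :\ x) set0.
    by rewrite cards0 card_gt0; apply/set0Pn; exists (other_end ek x).
  have sZ'P : Z :\ x \subset P := subset_trans (subsetDl _ _) (subset_trans (subsetIl _ _) sXi).
  have nZ'P : Z :\ x != P by apply: contraTneq xP => <-; rewrite !inE eqxx.
  apply: leq_trans (hall_strictH sZ'P nzZ' nZ'P) (subset_leq_card _).
  apply/subsetP=> b bN; rewrite !in_setD1.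
  rewrite (subsetP (nbS _ _ (subxx _) (subsetDl Z [set x])) b bN) andbT.
  apply/andP; split; apply: contraTneq bN => ->.
    exact: other_end_notin_nb ejH ejx dXj (subsetIr _ _).
  exact: other_end_notin_nb eiH eix dXi (subsetIl _ _).
have := cardsD1 yi (nb H Z); have := cardsD1 yj (nb H Z :\ yi).
rewrite yZ // in_setD1 yij yZ //= => cyj cyi.
by have := cardsD1 x Z; rewrite xZ; card_lia.
Qed.

Definition unreached e X : {set V} := ~: P :\: nb (H :\ e) X.

Lemma card_unreached e X : deficient e X -> #|P :\: X| <= #|unreached e X|.
Proof.
move=> [_ sXP _ le _]; have sNQ : nb (H :\ e) X \subset ~: P.
  by apply: nb_subC => // f; rewrite in_setD1 => /andP[_ /crossH].
rewrite /unreached !cardsD (setIidPr sXP) (setIidPr sNQ) balancedP.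
by move: le; card_lia.
Qed.

Variable eQ : E.
Hypothesis insideD : forall f, f \in D -> f != eQ -> inside u v P f.

Lemma doubleton_eQ m y : m \in D -> incident m y -> y \notin P -> m = eQ.
Proof.
move=> mD my; apply: contraNeq => mQ; have := insideD mD mQ.
by rewrite /inside; case/incidentP: my => -> /andP[].
Qed.

(* A perfect matching of G - x - s, for s in P :\: X, would match
   unreached e X into (P :\: X) :\ s, which is too small. *)
Lemma deficient_doubleton e X : incident e x -> deficient e X ->
  (u eQ \in unreached e X) || (v eQ \in unreached e X).
Proof.
move=> ex dX; have [xX sXP nXP _ _] := dX.
apply: contraT; rewrite negb_or => /andP[uY vY].
have [s sP sX] : exists2 s, s \in P & s \notin X.
  by apply/subsetPn; apply: contra nXP => sPX; rewrite eqEsubset sXP.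
have xs : x != s by apply: contraNneq sX => <-.
have [_ _ brickG] := Gbrick; have [M hM] := brickG x s (in_setT x) (in_setT s) xs.
have : #|unreached e X| <= #|(P :\: X) :\ s|.
  apply: (card_le_matched loopless hM).
  - apply/subsetP=> y; rewrite !inE andbT => /andP[_ yP].
    by apply/andP; split; apply: contraNneq yP => ->.
  - apply/subsetP=> z; rewrite !inE => /and3P[-> zX _]; rewrite andbT.
    by apply: contraNneq zX => ->.
  - by apply/pred0P=> z /=; rewrite !inE; case: (z \in P); rewrite ?andbF.
  move=> y m yY mM my; move: (yY); rewrite /unreached in_setD in_setC => /andP[yN yP].
  have mG := subsetP hM.1 m mM.
  have mx := edges_avoiding_incident mG (setU11 x [set s]).
  have ms := edges_avoiding_incident mG (setU1r x (set11 s)).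
  have mH : m \in H.
    apply: notin_doubleton; apply/negP => mD; have meQ := doubleton_eQ mD my yP; subst m.
    by case/incidentP: my => yE; [move: uY | move: vY]; rewrite -yE yY.
  have me : m != e by apply: contraNneq mx => ->.
  have wP : other_end m y \in P.
    by apply: (adj_inP crossH (adj_other_end loopless mH my)); rewrite inE.
  rewrite !inE wP andbT; apply/andP; split.
    by apply: contraNneq ms => <-; apply: incident_other_end.
  apply: contraNN yN => wX; apply/nbP; exists (other_end m y) => //.
  by rewrite adj_sym; apply: (adj_other_end loopless _ my); rewrite in_setD1 me.
move: (card_unreached dX); rewrite (cardsD1 s (P :\: X)) !inE sX sP; card_lia.
Qed.

Lemma unreached_mate ei ej Xi Xj m w q : ei \in H -> incident ei x -> ei != ej ->
  x \in Xj -> q \in unreached ei Xi -> m \in H -> joins u v m w q -> w \in Xi -> w \in P ->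
  q \in nb (H :\ ej) Xj.
Proof.
move=> eiH eix eij xXj; rewrite /unreached in_setD => /andP[qN _] mH jm wXi wP.
have [mei|mei] := eqVneq m ei; last first.
  apply: contraNT qN => _; apply/nbP; exists w => //.
  by apply/adjP; exists m; rewrite // in_setD1 mei.
subst m; have [ew _] := joins_incident jm.
have wx := incident_inP_x eiH eix ew wP; subst w.
by rewrite -(other_endE loopless jm); apply: other_end_nb.
Qed.

Lemma unreached_disjoint ei ej Xi Xj : ei \in H -> ej \in H ->
  incident ei x -> incident ej x -> ei != ej ->
  deficient ei Xi -> deficient ej Xj -> Xi :|: Xj = P ->
  [disjoint unreached ei Xi & unreached ej Xj].
Proof.
move=> eiH ejH eix ejx eij [xXi _ _ _ _] [xXj _ _ _ _] XP.
apply/pred0P=> q /=; apply/negP => /andP[qi qj].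
have [_ _ _ _ /matching_covered_pm[M hM]] := hdb.
have [m mM mq] := perfect_matching_cover hM (in_setT q).
have mH := subsetP hM.1 m mM; set w := other_end m q.
have jm : joins u v m w q by rewrite joins_sym; apply: joins_other_end.
have wP : w \in P.
  apply: (adj_inP crossH (adj_other_end loopless mH mq)).
  by move: qi; rewrite /unreached in_setD => /andP[].
have : w \in Xi :|: Xj by rewrite XP.
rewrite in_setU => /orP[wX|wX].
  by move: qj; rewrite /unreached in_setD (unreached_mate eiH eix eij xXj qi mH jm wX wP).
rewrite eq_sym in eij.
by move: qi; rewrite /unreached in_setD (unreached_mate ejH ejx eij xXi qj mH jm wX wP).
Qed.

Lemma typeII_at_most_two T :
  (forall e, e \in T -> incident e x /\ typeII u v [set: V] [set: E] e1 e2 e) -> #|T| <= 2.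
Proof.
move=> hT; rewrite leqNgt; apply/negP => /card_gt2P[a [b [c [[aT bT cT] [ab bc ca]]]]].
have witness e : e \in T -> [/\ e \in H, incident e x & exists X, deficient e X].
  move=> eT; have [ex [eD _ nrH]] := hT e eT; have eH := notin_doubleton eD.
  by split=> //; apply: deficient_exists.
have [aH ax [Xa da]] := witness a aT; have [bH bx [Xb db]] := witness b bT.
have [cH cx [Xc dc]] := witness c cT.
have [ac ba cb] : [/\ a != c, b != a & c != b] by split; rewrite eq_sym.
have dab := unreached_disjoint aH bH ax bx ab da db
  (deficient_cover aH bH cH ax bx cx ab ac bc da db).
have dac := unreached_disjoint aH cH ax cx ac da dc
  (deficient_cover aH cH bH ax cx bx ac ab cb da dc).
have dbc := unreached_disjoint bH cH bx cx bc db dc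
  (deficient_cover bH cH aH bx cx ax bc ba ca db dc).
case/orP: (deficient_doubleton ax da) => ha; case/orP: (deficient_doubleton bx db) => hb;
case/orP: (deficient_doubleton cx dc) => hc;
first [by rewrite (disjointFr dab ha) in hb | by rewrite (disjointFr dac ha) in hc
      | by rewrite (disjointFr dbc hb) in hc].
Qed.

End TypeII.

Theorem mainTheorem7 (V E : finType) (u v : E -> V)
  (loopless : forall e, u e != v e)
  (e1 e2 : E)
  (Gnb : near_bipartite u v [set: V] [set: E])
  (Gbrick : brick u v [set: V] [set: E])
  (hdb : removable_doubleton u v [set: V] [set: E] e1 e2) :
  forall x : V,
    (forall T : {set E},
       (forall e, e \in T -> incident u v e x /\ typeI u v [set: V] [set: E] e1 e2 e) ->
       #|T| <= 1)
  /\
    (forall T : {set E},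
       (forall e, e \in T -> incident u v e x /\ typeII u v [set: V] [set: E] e1 e2 e) ->
       #|T| <= 2).
Proof.
move=> x; have [_ _ _ [A crossA] _] := hdb.
pose P := if x \in A then A else ~: A.
have crossH e : e \in [set: E] :\ e1 :\ e2 -> crossing u v P e.
  by move/crossA; rewrite /P; case: ifP; rewrite ?crossingC.
have xP : x \in P by rewrite /P; case: ifP => // /negbT; rewrite inE.
have [eQ _ insideD] := doubleton_sides loopless Gnb hdb crossH.
split; first exact: (typeI_at_most_one loopless Gnb Gbrick hdb crossH).
exact: (typeII_at_most_two loopless Gbrick hdb crossH xP insideD).
Qed.
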